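(* Every SSSCG in which the leader's cost functions are weakly monotonic and the followers' cost functions are strictly monotonic has the following property: if it admits a PSE $(\sigma_\ell,\nu)$ with $\sigma_\ell$ mixed, then it also admits a PSE $(\hat\sigma_\ell,\hat\nu)$ with $\hat\sigma_\ell$ pure; in particular, it admits a PSE in which the leader's strategy is pure.
   Context: A symmetric Stackelberg singleton congestion game (SSSCG) consists of a leader $\ell$, a finite set $F$ of followers, a finite set $R$ of resources which every player may select (each player selects exactly one), and cost functions $c_{i,\ell},c_{i,f}:\mathbb N\to\mathbb Q$ ($i\in R$) for the leader and the followers with $c_{i,\ell}(0)=c_{i,f}(0)=0$. The leader commits to a probability distribution $\sigma_\ell$ on $R$ (pure if it puts probability $1$ on one resource). A followers' configuration is $\nu\in\mathbb N^R$ with $\sum_i\nu_i=|F|$. The followers' expected cost of resource $i$ with $x$ followers is $c^{\sigma_\ell}_{i,f}(x)=\sigma_\ell(i)c_{i,f}(x+1)+(1-\sigma_\ell(i))c_{i,f}(x)$; the leader's cost is $c_\ell^{(\sigma_\ell,\nu)}=\sum_{i\in R}\sigma_\ell(i)c_{i,\ell}(\nu_i+1)$. $\nu$ is a Nash equilibrium for $\sigma_\ell$ ($\nu\in E^{\sigma_\ell}$) if for all $i$ with $\nu_i>0$ and all $j\ne i$, $c^{\sigma_\ell}_{i,f}(\nu_i)\le c^{\sigma_\ell}_{j,f}(\nu_j+1)$. A pessimistic Stackelberg equilibrium (PSE) is a pair $(\sigma_\ell,\nu)$ such that $\sigma_\ell$ attains the minimum over all leader strategies of $\max_{\nu'\in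 E^{\sigma_\ell}}c_\ell^{(\sigma_\ell,\nu')}$ and $\nu\in E^{\sigma_\ell}$ attains that maximum. Weakly monotonic leader costs: $c_{i,\ell}(x)\le c_{i,\ell}(x+1)$ for all $i,x$; strictly monotonic follower costs: $c_{i,f}(x)<c_{i,f}(x+1)$ for all $i,x$. *)

From HB Require Import structures.
From mathcomp Require Import all_boot all_order all_algebra.
Set Implicit Arguments. Unset Strict Implicit. Unset Printing Implicit Defensive.
Import Order.TTheory GRing.Theory Num.Theory.
Local Open Scope ring_scope.

(* Symmetric Stackelberg singleton congestion game.
   - K : realFieldType, the ordered field in which leader probabilities live
     (the paper: real numbers);
   - Res : finType, the resources;
   - Fol : finType, the followers (only #|Fol| matters);
   - cl i x = c_{i,l}(x), cf i x = c_{i,f}(x), rational-valued. *)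

Definition is_strategy (K : realFieldType) (Res : finType) (s : Res -> K) : Prop :=
  (forall i, 0 <= s i) /\ \sum_(i : Res) s i = 1.

Definition is_pure (K : realFieldType) (Res : finType) (s : Res -> K) : Prop :=
  exists i, s i = 1.

Definition is_config (Res Fol : finType) (nu : Res -> nat) : Prop :=
  (\sum_(i : Res) nu i)%N = #|Fol|.

Definition fcost (K : realFieldType) (Res : finType) (cf : Res -> nat -> rat)
  (s : Res -> K) (i : Res) (x : nat) : K :=
  s i * ratr (cf i x.+1) + (1 - s i) * ratr (cf i x).

Definition lcost (K : realFieldType) (Res : finType) (cl : Res -> nat -> rat)
  (s : Res -> K) (nu : Res -> nat) : K :=
  \sum_(i : Res) s i * ratr (cl i (nu i).+1).

Definition is_NE (K : realFieldType) (Res Fol : finType) (cf : Res -> nat -> rat)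
  (s : Res -> K) (nu : Res -> nat) : Prop :=
  is_config Fol nu /\
  forall i j : Res, (0 < nu i)%N -> i != j ->
    fcost cf s i (nu i) <= fcost cf s j (nu j).+1.

Definition is_PSE (K : realFieldType) (Res Fol : finType)
  (cl cf : Res -> nat -> rat) (s : Res -> K) (nu : Res -> nat) : Prop :=
  is_strategy s /\ is_NE Fol cf s nu /\
  (forall nu', is_NE Fol cf s nu' -> lcost cl s nu' <= lcost cl s nu) /\
  (forall s', is_strategy s' ->
     exists2 nu', is_NE Fol cf s' nu' & lcost cl s nu <= lcost cl s' nu').

From HB Require Import structures.
From mathcomp Require Import all_boot all_order all_algebra.
From mathcomp Require Import ring.
From Stdlib Require Import Classical FunctionalExtensionality.
Set Implicit Arguments. Unset Strict Implicit. Unset Printing Implicit Defensive.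
Import Order.TTheory GRing.Theory Num.Theory.
Local Open Scope ring_scope.

(* Write [dirac j] for the pure strategy playing resource j.  The argument:
   1. Every leader strategy admits a Nash equilibrium of the followers, built
      greedily (each new follower picks a cheapest next slot).
   2. Comparison of loads: if the leader puts probability < 1 on resource i,
      then resource i carries at least as many followers in any equilibrium
      as it does in any equilibrium against [dirac i].  This is where the
      strict monotonicity of the follower costs is used.
   3. For each j fix an equilibrium [mu j] against [dirac j] maximizing the
      load on j; since leader costs are monotone, [mu j] is a worst-case
      equilibrium for [dirac j], with cost [cl j (mu j j).+1].
   4. By 2 (and 3 for pure strategies), every leader strategy has an
      equilibrium in which each resource i it plays carries at least the
      load [mu i i], so its worst-case cost is at least min_j cl j (mu j j).+1.
   Hence [dirac j*], with j* minimizing cl j (mu j j).+1, together with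
   [mu j*] is a pessimistic Stackelberg equilibrium with a pure strategy;
   both parts of the theorem follow. *)

Lemma ratr_nondecreasing (F : numFieldType) (f : nat -> rat) m n :
  (forall x, f x <= f x.+1) -> (m <= n)%N -> (ratr (f m) : F) <= ratr (f n).
Proof.
by move=> f_mono le_mn; rewrite ler_rat; apply: Order.NatMonotonyTheory.nondecnP.
Qed.

Lemma bounded_max_nat (P : nat -> Prop) b :
  (exists n, P n) -> (forall n, P n -> (n <= b)%N) ->
  exists n, P n /\ forall m, P m -> (m <= n)%N.
Proof.
elim: b => [|b IH] [n Pn] le_b.
  by exists n; split=> // m /le_b; rewrite leqn0 => /eqP ->.
have [Pb|nPb] := classic (P b.+1); first by exists b.+1.
apply: IH; first by exists n.
move=> m Pm; move: (le_b m Pm); rewrite leq_eqVlt => /orP[/eqP em|//].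
by rewrite em in Pm.
Qed.

Lemma exchange_of_load (T : finType) (f g : T -> nat) i :
  (\sum_k f k = \sum_k g k)%N -> (f i < g i)%N ->
  exists2 k, k != i & (g k < f k)%N.
Proof.
move=> esum lt_i; case: (pickP (fun k => (k != i) && (g k < f k)%N)).
  by move=> k /andP[]; exists k.
move=> none; have le_k k : k != i -> (f k <= g k)%N.
  by move=> ki; move: (none k); rewrite ki /= => /negbT; rewrite -leqNgt.
suff : (\sum_k f k < \sum_k g k)%N by rewrite esum ltnn.
rewrite (bigD1 i) //= [X in (_ < X)%N](bigD1 i) //=.
by rewrite -addSn leq_add // leq_sum.
Qed.

Section Followers.
Variables (K : realFieldType) (Res Fol : finType) (cf : Res -> nat -> rat).
Hypothesis cf_incr : forall i x, cf i x < cf i x.+1.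

Definition dirac (j : Res) : Res -> K := fun i => (i == j)%:R.

Lemma dirac_strategy j : is_strategy (dirac j).
Proof.
split=> [i|]; first by rewrite /dirac; case: (i == j).
by rewrite (bigD1 j) //= big1 ?addr0 /dirac ?eqxx // => i /negbTE ->.
Qed.

Lemma dirac_pure j : is_pure (dirac j).
Proof. by exists j; rewrite /dirac eqxx. Qed.

Lemma pure_strategy_dirac (s : Res -> K) j :
  is_strategy s -> s j = 1 -> s = dirac j.
Proof.
move=> [s_ge0 s_sum] sj; apply: functional_extensionality => k.
rewrite /dirac; case: (eqVneq k j) => [->|kj] //=.
move: s_sum; rewrite (bigD1 j) //= sj -[RHS]addr0 => /addrI rest0.
by apply: (psumr_eq0P _ rest0) => // ? _.
Qed.

Lemma strategy_le1 (s : Res -> K) i : is_strategy s -> s i <= 1.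
Proof.
case=> s_ge0 <-; rewrite (bigD1 i) //= lerDl.
by apply: sumr_ge0.
Qed.

Lemma fcost_dirac_eq j x : fcost cf (dirac j) j x = ratr (cf j x.+1).
Proof. by rewrite /fcost /dirac eqxx subrr mul0r addr0 mul1r. Qed.

Lemma fcost_dirac_neq j i x : i != j -> fcost cf (dirac j) i x = ratr (cf i x).
Proof.
by move=> /negbTE ij; rewrite /fcost /dirac ij mul0r add0r subr0 mul1r.
Qed.

Lemma fcost_gap (s : Res -> K) i x :
  ratr (cf i x.+1) - fcost cf s i x =
  (1 - s i) * (ratr (cf i x.+1) - ratr (cf i x)).
Proof. by rewrite /fcost; ring. Qed.

Lemma cf_ratr_lt i x : (ratr (cf i x) : K) < ratr (cf i x.+1).
Proof. by rewrite ltr_rat. Qed.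

Lemma fcost_ge_cf (s : Res -> K) i x : is_strategy s ->
  ratr (cf i x) <= fcost cf s i x.
Proof.
move=> hs; rewrite -subr_ge0.
have -> : fcost cf s i x - ratr (cf i x) =
          s i * (ratr (cf i x.+1) - ratr (cf i x)) by rewrite /fcost; ring.
by rewrite mulr_ge0 ?hs.1 // subr_ge0 ltW ?cf_ratr_lt.
Qed.

Lemma fcost_le_cf_succ (s : Res -> K) i x : is_strategy s ->
  fcost cf s i x <= ratr (cf i x.+1).
Proof.
move=> hs; rewrite -subr_ge0 fcost_gap mulr_ge0 // ?subr_ge0 ?strategy_le1 //.
exact/ltW/cf_ratr_lt.
Qed.

Lemma fcost_lt_cf_succ (s : Res -> K) i x : s i < 1 ->
  fcost cf s i x < ratr (cf i x.+1).
Proof.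
by move=> si1; rewrite -subr_gt0 fcost_gap mulr_gt0 ?subr_gt0 ?cf_ratr_lt.
Qed.

Lemma fcost_nondecreasing (s : Res -> K) i m n : is_strategy s -> (m <= n)%N ->
  fcost cf s i m <= fcost cf s i n.
Proof.
move=> hs; apply: Order.NatMonotonyTheory.nondecnP => x.
exact: le_trans (fcost_le_cf_succ i x hs) (fcost_ge_cf i x.+1 hs).
Qed.

(* Greedy construction: adding followers one at a time on a resource of
   cheapest next slot preserves the equilibrium inequalities. *)
Lemma greedy_config (s : Res -> K) (k0 : Res) n : is_strategy s ->
  exists nu : Res -> nat, (\sum_i nu i)%N = n /\
    forall i j, (0 < nu i)%N -> fcost cf s i (nu i) <= fcost cf s j (nu j).+1.
Proof.
move=> hs; elim: n => [|n [nu [nu_sum nu_eq]]].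
  by exists (fun _ => 0%N); split; [rewrite big1|].
set k := [arg min_(k < k0) fcost cf s k (nu k).+1]%O.
have k_min j : fcost cf s k (nu k).+1 <= fcost cf s j (nu j).+1.
  by rewrite /k; case: arg_minP => // k' _; apply.
pose nu' j := if j == k then (nu j).+1 else nu j.
have nu'_ge j : fcost cf s j (nu j).+1 <= fcost cf s j (nu' j).+1.
  by apply: fcost_nondecreasing; rewrite /nu'; case: (j == k).
exists nu'; split.
  rewrite (bigD1 k) //= /nu' eqxx -nu_sum [in RHS](bigD1 k) //= addSn.
  by congr (_ + _)%N.+1; apply: eq_bigr => i /negbTE ->.
move=> i j; rewrite /nu'; case: (eqVneq i k) => [-> _|_ nui].
  exact: le_trans (k_min j) (nu'_ge j).
exact: le_trans (nu_eq i j nui) (nu'_ge j).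
Qed.

Lemma NE_exists (s : Res -> K) : (0 < #|Res|)%N -> is_strategy s ->
  exists nu, is_NE Fol cf s nu.
Proof.
move=> /card_gt0P [k0 _] hs.
have [nu [nu_sum nu_eq]] := greedy_config k0 #|Fol| hs.
by exists nu; split=> // i j nui _; apply: nu_eq.
Qed.

Lemma NE_load_ge_dirac (s : Res -> K) i nu mu : is_strategy s -> s i < 1 ->
  is_NE Fol cf s nu -> is_NE Fol cf (dirac i) mu -> (mu i <= nu i)%N.
Proof.
move=> hs si1 [nu_sum nu_eq] [mu_sum mu_eq]; rewrite leqNgt; apply/negP => lt_i.
have [k ki lt_k] := exchange_of_load (etrans nu_sum (esym mu_sum)) lt_i.
have mu_i : ratr (cf i (mu i).+1) <= (ratr (cf k (mu k).+1) : K).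
  have ik : i != k by rewrite eq_sym.
  move: (mu_eq i k (leq_ltn_trans (leq0n _) lt_i) ik).
  by rewrite fcost_dirac_eq fcost_dirac_neq.
have nu_k : fcost cf s k (nu k) <= fcost cf s i (nu i).+1.
  exact: nu_eq k i (leq_ltn_trans (leq0n _) lt_k) ki.
have cf_k : ratr (cf k (mu k).+1) <= fcost cf s k (nu k).
  exact: le_trans (ratr_nondecreasing _ (fun x => ltW (cf_incr k x)) lt_k)
                  (fcost_ge_cf k _ hs).
have cf_i : fcost cf s i (nu i).+1 < ratr (cf i (mu i).+1).
  have le_i : ((nu i).+2 <= (mu i).+1)%N by [].
  exact: lt_le_trans (fcost_lt_cf_succ _ si1)
                     (ratr_nondecreasing _ (fun x => ltW (cf_incr i x)) le_i).
have := le_lt_trans mu_i (le_lt_trans cf_k (le_lt_trans nu_k cf_i)).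
by rewrite ltxx.
Qed.

Lemma max_load_NE j : (0 < #|Res|)%N ->
  exists mu, is_NE Fol cf (dirac j) mu /\
    forall mu', is_NE Fol cf (dirac j) mu' -> (mu' j <= mu j)%N.
Proof.
move=> hRes; pose P n := exists mu, is_NE Fol cf (dirac j) mu /\ mu j = n.
have [n [[mu [mu_NE <-]] n_max]] : exists n, P n /\ forall m, P m -> (m <= n)%N.
  apply: (bounded_max_nat (b := #|Fol|)).
    by have [mu mu_NE] := NE_exists hRes (dirac_strategy j); exists (mu j), mu.
  by move=> n [mu [[<- _] <-]]; rewrite (bigD1 j) //= leq_addr.
by exists mu; split=> // mu' mu'_NE; apply: n_max; exists mu'.
Qed.

Lemma NE_dominating_loads (mu : Res -> Res -> nat) (s : Res -> K) :
  (0 < #|Res|)%N -> is_strategy s ->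
  (forall j, is_NE Fol cf (dirac j) (mu j) /\
     forall mu', is_NE Fol cf (dirac j) mu' -> (mu' j <= mu j j)%N) ->
  exists2 nu, is_NE Fol cf s nu & forall i, 0 < s i -> (mu i i <= nu i)%N.
Proof.
move=> hRes hs mu_max.
case: (pickP (fun i => s i == 1)) => [i0 /eqP si0|nonpure].
  have -> := pure_strategy_dirac hs si0.
  exists (mu i0) => [|i]; first exact: (mu_max i0).1.
  by rewrite /dirac; case: (eqVneq i i0) => [->|_] //; rewrite ltxx.
have [nu nu_NE] := NE_exists hRes hs.
exists nu => // i _; apply: NE_load_ge_dirac nu_NE (mu_max i).1 => //.
by rewrite lt_neqAle strategy_le1 // andbT nonpure.
Qed.

End Followers.

Section Leader.
Variables (K : realFieldType) (Res : finType) (cl : Res -> nat -> rat).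

Lemma lcost_dirac j nu : lcost cl (dirac K j) nu = ratr (cl j (nu j).+1).
Proof.
rewrite /lcost (bigD1 j) //= big1 ?addr0 /dirac ?eqxx ?mul1r // => i /negbTE ->.
by rewrite mul0r.
Qed.

(* The leader's expected cost is a convex combination of per-resource costs,
   hence bounded below by their minimum over the played resources. *)
Lemma lcost_ge_const (s : Res -> K) nu (c : K) : is_strategy s ->
  (forall i, 0 < s i -> c <= ratr (cl i (nu i).+1)) -> c <= lcost cl s nu.
Proof.
move=> [s_ge0 s_sum] c_le; rewrite /lcost -[c]mul1r -s_sum mulr_suml.
apply: ler_sum => i _; have := s_ge0 i; rewrite le_eqVlt => /orP[/eqP <-|si].
  by rewrite !mul0r.
by rewrite ler_wpM2l ?c_le ?ltW.
Qed.

End Leader.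

Theorem theorem8 (K : rcfType) (Res Fol : finType)
  (cl cf : Res -> nat -> rat)
  (hRes : (0 < #|Res|)%N)
  (hcl0 : forall i, cl i 0%N = 0) (hcf0 : forall i, cf i 0%N = 0)
  (hclmon : forall i x, cl i x <= cl i x.+1)
  (hcfmon : forall i x, cf i x < cf i x.+1) :
  (forall (s : Res -> K) (nu : Res -> nat),
      is_PSE Fol cl cf s nu -> ~ is_pure s ->
      exists (s' : Res -> K) (nu' : Res -> nat),
        is_PSE Fol cl cf s' nu' /\ is_pure s') /\
  (exists (s : Res -> K) (nu : Res -> nat), is_PSE Fol cl cf s nu /\ is_pure s).
Proof.
suff pure_PSE : exists (s : Res -> K) nu, is_PSE Fol cl cf s nu /\ is_pure s.
  by split=> // s nu _ _.
have cl_mono i m n : (m <= n)%N -> (ratr (cl i m) : K) <= ratr (cl i n).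
  exact: ratr_nondecreasing.
have [mu mu_max] :=
  fin_all_exists (fun j => @max_load_NE K Res Fol cf hcfmon j hRes).
have [k0 _] := card_gt0P hRes.
set j := [arg min_(j < k0) cl j (mu j j).+1]%O.
have j_min i : cl j (mu j j).+1 <= cl i (mu i i).+1.
  by rewrite /j; case: arg_minP => // j' _; apply.
exists (dirac K j), (mu j); split; last exact: dirac_pure.
split; [exact: dirac_strategy | split; [exact: (mu_max j).1 | split]].
- by move=> nu' nu'_NE; rewrite !lcost_dirac cl_mono // ltnS (mu_max j).2.
- move=> s hs.
  have [nu nu_NE nu_ge] := NE_dominating_loads hcfmon hRes hs mu_max.
  exists nu; rewrite // lcost_dirac; apply: lcost_ge_const => // i si.
  have load_i : ((mu i i).+1 <= (nu i).+1)%N by rewrite ltnS nu_ge.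
  by apply: le_trans (cl_mono i _ _ load_i); rewrite ler_rat.
Qed.
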